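(* Define $V:\mathbb{R}\to\mathbb{R}$ by $V(x) = c_0$ for $x<1$ and $V(x) = c_0 - \frac{(x-1)^2}{2}$ for $x\ge 1$, where $c_0\in\mathbb{R}$ is the constant making $\int e^{-V}\,d\gamma = 1$. Then $x\mapsto V(x) + x^2/2$ is convex (i.e. $V''\ge -1$), $\sup V<\infty$, and there is no $L>0$ and no $L$-Lipschitz map $T:\mathbb{R}\to\mathbb{R}$ with $T_\#\gamma = e^{-V}\,d\gamma$.
   Context: $\gamma$ is the standard Gaussian measure on $\mathbb{R}$. The push-forward is $(T_\#\nu)(A)=\nu(T^{-1}(A))$ for Borel $A$. *)

From HB Require Import structures.
From mathcomp Require Import all_boot all_order all_algebra.
From mathcomp Require Import all_classical all_reals all_analysis.
Set Implicit Arguments. Unset Strict Implicit. Unset Printing Implicit Defensive.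
Import Order.TTheory GRing.Theory Num.Theory.
Local Open Scope ring_scope.

Definition Vpot {R : realType} (c0 : R) (x : R) : R :=
  if x < 1 then c0 else c0 - (x - 1) ^+ 2 / 2.

Definition gamma {R : realType} := @normal_prob R 0 1.

From HB Require Import structures.
From mathcomp Require Import all_boot all_order all_algebra.
From mathcomp Require Import all_classical all_reals all_analysis.
From mathcomp Require Import ring lra measurable_realfun.
Set Implicit Arguments.
Unset Strict Implicit.
Import Order.TTheory GRing.Theory Num.Theory numFieldNormedType.Exports.
Local Open Scope classical_set_scope.
Local Open Scope ring_scope.

(* V + x^2/2 is the upper envelope of the lines a x + c0 - a^2/2 with a <= 1,
   hence convex.  Beyond 1 the density e^{-V} grows like e^{(x-1)^2/2}, so
   e^{-V} dγ only has an exponential tail: it gives [s, s+1] mass at least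
   c e^{-2s}.  An L-Lipschitz T can reach [s, s+1] only from points with
   |x| >= (s - |T 0|)/L, a set of Gaussian mass O(e^{-(s - |T 0|)^2 / 4L^2}).
   Quadratic decay in s eventually beats linear decay, so T cannot push γ
   forward to e^{-V} dγ. *)

Lemma convex_of_tangent_lines (R : numDomainType) (f slope icpt : R -> R) :
  (forall z x, slope z * x + icpt z <= f x) ->
  (forall z, f z = slope z * z + icpt z) ->
  forall x y t, 0 <= t <= 1 -> f ((1 - t) * x + t * y) <= (1 - t) * f x + t * f y.
Proof.
move=> f_ge f_eq x y t /andP[t0 t1]; set z := (1 - t) * x + t * y.
have -> : f z = (1 - t) * (slope z * x + icpt z) + t * (slope z * y + icpt z).
  by rewrite f_eq /z; ring.
by rewrite lerD // ler_wpM2l ?f_ge // subr_ge0.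
Qed.

Lemma Vpot_tangent_le (R : realType) (c0 a x : R) : a <= 1 ->
  a * x + (c0 - a ^+ 2 / 2) <= Vpot c0 x + x ^+ 2 / 2.
Proof.
move=> a1; rewrite /Vpot; case: ifPn => [_|]; first by have := sqr_ge0 (x - a); nra.
by rewrite -leNgt => x1; nra.
Qed.

Lemma Vpot_tangent_eq (R : realType) (c0 z : R) :
  Vpot c0 z + z ^+ 2 / 2 = Num.min z 1 * z + (c0 - Num.min z 1 ^+ 2 / 2).
Proof. by rewrite /Vpot; case: ltP => _; nra. Qed.

Lemma Vpot_le (R : realType) (c0 x : R) : Vpot c0 x <= c0.
Proof. by rewrite /Vpot; case: ifP => // _; rewrite gerBl divr_ge0 ?sqr_ge0. Qed.

Lemma lipschitz_continuous (K : numFieldType) (V W : normedModType K)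
    (L : K) (f : V -> W) :
  0 < L -> (forall x y, `|f x - f y| <= L * `|x - y|) -> continuous f.
Proof.
move=> L0 f_lip x; apply/cvgrPdist_lt => e e0; near=> y.
rewrite (le_lt_trans (f_lip x y)) // -ltr_pdivlMl //.
by near: y; apply: cvgr_dist_lt; rewrite // mulr_gt0 ?invr_gt0.
Unshelve. all: by end_near.
Qed.

Lemma lipschitz_le_affine (R : realDomainType) (L : R) (f : R -> R) :
  (forall x y, `|f x - f y| <= L * `|x - y|) ->
  forall x, f x <= `|f 0| + L * `|x|.
Proof.
move=> f_lip x; have := f_lip x 0; rewrite subr0.
have := ler_normD (f x - f 0) (f 0); rewrite subrK addrC.
by have := ler_norm (f x); lra.
Qed.

Lemma exists_sqr_gt_affine (R : realDomainType) (a b K : R) : 0 <= K ->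
  exists s, [/\ 1 <= s, K <= s & a * s + b < (s - K) ^+ 2].
Proof.
move=> K0; set u := 1 + `|a| + `|a * K + b|.
have u1 : 1 <= u by rewrite /u -addrA lerDl addr_ge0.
exists (K + u); split; [lra | by rewrite lerDl; lra |].
rewrite addrAC subrr add0r.
have ha := ler_norm a; have hb := ler_norm (a * K + b).
have h1 : a * u <= `|a| * u by rewrite ler_wpM2r //; lra.
have h2 : `|a * K + b| <= `|a * K + b| * u by rewrite ler_peMr.
have -> : u ^+ 2 = u + `|a| * u + `|a * K + b| * u by rewrite /u; ring.
lra.
Qed.

Lemma measurable_Vpot (R : realType) (c0 : R) : measurable_fun setT (Vpot c0).
Proof.
apply: measurable_fun_if => //.
- exact: (@measurable_fun_ltr _ _ _ _ id (cst 1)).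
- apply: measurable_funB => //; apply: measurable_funM => //.
  by apply: measurable_funX; apply: measurable_funB.
Qed.

Lemma integral_ge_cst d (T : measurableType d) (R : realType)
    (mu : {measure set T -> \bar R}) (A : set T) (f : T -> R) (m : R) :
  measurable A -> measurable_fun A f -> 0 <= m -> (forall x, A x -> m <= f x) ->
  (m%:E * mu A <= \int[mu]_(x in A) (f x)%:E)%E.
Proof.
move=> mA mf m0 mf_le; rewrite -(integral_cst mu mA).
by apply: ge0_le_integral => //; exact/measurable_EFinP.
Qed.

Lemma normal_pdf0E (R : realType) (s x : R) : s != 0 ->
  normal_pdf 0 s x = normal_peak s * expR (- x ^+ 2 / (s ^+ 2 *+ 2)).
Proof. by move=> s0; rewrite /normal_pdf (negbTE s0) /normal_fun subr0. Qed.

Lemma gamma_itv_ge (R : realType) (a b : R) : 0 <= a <= b ->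
  (((b - a) * (normal_peak 1 * expR (- b ^+ 2 / 2)))%:E <= @gamma R `[a, b])%E.
Proof.
move=> /andP[a0 ab]; rewrite EFinM muleC.
have -> : (b - a)%:E = lebesgue_measure (`[a, b] : set R).
  by rewrite lebesgue_measure_itv /= lte_fin; case: ltgtP ab => // ->; rewrite subrr.
apply: integral_ge_cst => //.
- exact: measurable_funS (measurable_normal_pdf _ _).
- by rewrite mulr_ge0 ?normal_peak_ge0 ?expR_ge0.
move=> x; rewrite /= in_itv /= => /andP[ax xb].
rewrite normal_pdf0E ?oner_eq0 // expr1n ler_wpM2l ?normal_peak_ge0 // ler_expR.
have : x ^+ 2 <= b ^+ 2 by rewrite lerXn2r ?nnegrE //; lra.
lra.
Qed.

Lemma gamma_tail_le (R : realType) (r : R) (B : set R) : 0 <= r -> measurable B ->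
  B `<=` [set x | r <= `|x|] ->
  (@gamma R B <= (normal_peak 1 / normal_peak 2 * expR (- r ^+ 2 / 4))%:E)%E.
Proof.
move=> r0 mB B_far.
set k := normal_peak 1 / normal_peak 2 * expR (- r ^+ 2 / 4).
have p2 : 0 < normal_peak (2 : R) by rewrite normal_peak_gt0 ?pnatr_eq0.
have k0 : 0 <= k by rewrite mulr_ge0 ?expR_ge0 ?divr_ge0 ?normal_peak_ge0.
(* Dominate by the N(0, 2) density, whose total mass is 1. *)
have mpdf2 : measurable_fun setT (fun x => k * normal_pdf 0 2 x).
  by apply: measurable_funM => //; exact: measurable_normal_pdf.
apply: (@le_trans _ _ (\int[lebesgue_measure]_(x in B) (k * normal_pdf 0 2 x)%:E)%E).
  apply: ge0_le_integral => //.
  - by move=> x _; rewrite lee_fin normal_pdf_ge0.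
  - by apply/measurable_EFinP; apply: measurable_funS (measurable_normal_pdf _ _).
  - by apply/measurable_EFinP; apply: measurable_funS mpdf2.
  move=> x /B_far /= rx; rewrite lee_fin !normal_pdf0E ?oner_eq0 ?pnatr_eq0 //.
  have -> : k * (normal_peak 2 * expR (- x ^+ 2 / (2 ^+ 2 *+ 2))) =
      normal_peak 1 * expR (- r ^+ 2 / 4 + - x ^+ 2 / (2 ^+ 2 *+ 2)).
    by rewrite /k expRD; field; rewrite lt0r_neq0.
  rewrite ler_wpM2l ?normal_peak_ge0 // ler_expR expr1n.
  have : r ^+ 2 <= x ^+ 2 by rewrite -[x ^+ 2]real_normK ?num_real // lerXn2r ?nnegrE.
  nra.
apply: (@le_trans _ _ (\int[lebesgue_measure]_x (k * normal_pdf 0 2 x)%:E)%E).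
  apply: ge0_subset_integral => //; first exact/measurable_EFinP.
  by move=> x _; rewrite lee_fin mulr_ge0 ?normal_pdf_ge0.
under eq_integral do rewrite EFinM.
rewrite ge0_integralZl_EFin //.
- by rewrite integral_normal_pdf mule1.
- by move=> x _; rewrite lee_fin normal_pdf_ge0.
- by apply/measurable_EFinP; exact: measurable_normal_pdf.
Qed.

Lemma Vpot_mass_itv_ge (R : realType) (c0 s : R) : 1 <= s ->
  ((normal_peak 1 * expR (- (2 * s) - c0))%:E
   <= \int[@gamma R]_(x in `[s, (s + 1)%R]) (expR (- Vpot c0 x))%:E)%E.
Proof.
move=> s1; set m := expR ((s - 1) ^+ 2 / 2 - c0).
have -> : normal_peak 1 * expR (- (2 * s) - c0) =
    m * ((s + 1 - s) * (normal_peak 1 * expR (- (s + 1) ^+ 2 / 2))).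
  by rewrite addrAC subrr add0r mul1r mulrCA /m -expRD; congr (_ * expR _); field.
have s_itv : 0 <= s <= s + 1 by apply/andP; split; lra.
rewrite EFinM (le_trans (lee_wpmul2l _ (gamma_itv_ge s_itv))) ?lee_fin ?expR_ge0 //.
apply: integral_ge_cst => //; last 2 first.
- exact: expR_ge0.
- move=> x; rewrite /= in_itv /= => /andP[sx xs].
  rewrite ler_expR /Vpot ifF; last by apply/negbTE; rewrite -leNgt; lra.
  have : (s - 1) ^+ 2 <= (x - 1) ^+ 2 by rewrite lerXn2r ?nnegrE; lra.
  lra.
apply: measurableT_comp => //; apply: measurableT_comp => //.
apply: (measurable_funS measurableT) => //; exact: measurable_Vpot.
Qed.

Lemma lipschitz_transport_sqr_le (R : realType) (c0 L : R) (T : R -> R) :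
  0 < L -> (forall x y, `|T x - T y| <= L * `|x - y|) ->
  (forall A : set R, measurable A ->
     pushforward (@gamma R) T A = \int[@gamma R]_(x in A) (expR (- Vpot c0 x))%:E)%E ->
  forall s, 1 <= s -> `|T 0| <= s ->
  (s - `|T 0|) ^+ 2 <= 4 * L ^+ 2 * (2 * s + c0 - ln (normal_peak 2)).
Proof.
move=> L0 T_lip T_push s s1 Ks.
set K := `|T 0|; set r := (s - K) / L; set A := `[s, (s + 1)%R]%classic.
have r0 : 0 <= r by rewrite divr_ge0 ?subr_ge0 // ltW.
have mA : measurable A by exact: measurable_itv.
have mTA : measurable (T @^-1` A).
  have cT : continuous T by exact: lipschitz_continuous L0 T_lip.
  by have := continuous_measurable_fun cT measurableT mA; rewrite setTI.
have far : T @^-1` A `<=` [set x | r <= `|x|].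
  move=> x; rewrite /A /= in_itv /= => /andP[sx _].
  rewrite ler_pdivrMr // mulrC lerBlDl.
  exact: le_trans sx (lipschitz_le_affine T_lip x).
have lower := Vpot_mass_itv_ge c0 s1; rewrite -T_push // /pushforward in lower.
have := le_trans lower (gamma_tail_le r0 mTA far); rewrite lee_fin.
have p2 : 0 < normal_peak (2 : R) by rewrite normal_peak_gt0 ?pnatr_eq0.
rewrite -mulrA ler_pM2l ?normal_peak_gt0 ?oner_eq0 // ler_pdivlMl //.
rewrite -{1}(lnK p2) -expRD ler_expR => exponents.
have -> : s - K = r * L by rewrite divfK ?lt0r_neq0.
have := sqr_ge0 L; nra.
Qed.

Lemma Vpot_add_sqr_convex (R : realType) (c0 x y t : R) : 0 <= t <= 1 ->
  Vpot c0 ((1 - t) * x + t * y) + ((1 - t) * x + t * y) ^+ 2 / 2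
  <= (1 - t) * (Vpot c0 x + x ^+ 2 / 2) + t * (Vpot c0 y + y ^+ 2 / 2).
Proof.
apply: (@convex_of_tangent_lines R (fun w => Vpot c0 w + w ^+ 2 / 2)
  (fun z => Num.min z 1) (fun z => c0 - Num.min z 1 ^+ 2 / 2)).
- by move=> z w; apply: Vpot_tangent_le; rewrite ge_min lexx orbT.
- exact: Vpot_tangent_eq.
Qed.

Lemma Vpot_no_lipschitz_transport (R : realType) (c0 : R) :
  ~ (exists (L : R) (T : R -> R),
       [/\ 0 < L,
           (forall x y : R, `|T x - T y| <= L * `|x - y|) &
           (forall A : set R, measurable A ->
              pushforward (@gamma R) T A
              = \int[@gamma R]_(x in A) (expR (- Vpot c0 x))%:E)%E]).
Proof.
case=> L [T [L0 T_lip T_push]].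
have [s [s1 Ks]] := exists_sqr_gt_affine (8 * L ^+ 2)
  (4 * L ^+ 2 * (c0 - ln (normal_peak 2))) (normr_ge0 (T 0)).
have := lipschitz_transport_sqr_le L0 T_lip T_push s1 Ks.
lra.
Qed.

Theorem mainTheorem8 (R : realType) (c0 : R) :
  (\int[@gamma R]_x (expR (- Vpot c0 x))%:E = 1)%E ->
  [/\ (forall (x y t : R), 0 <= t <= 1 ->
         Vpot c0 ((1 - t) * x + t * y) + ((1 - t) * x + t * y) ^+ 2 / 2
         <= (1 - t) * (Vpot c0 x + x ^+ 2 / 2) + t * (Vpot c0 y + y ^+ 2 / 2)),
      (exists M : R, forall x : R, Vpot c0 x <= M) &
      ~ (exists (L : R) (T : R -> R),
           [/\ 0 < L,
               (forall x y : R, `|T x - T y| <= L * `|x - y|) &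
               (forall A : set R, measurable A ->
                  pushforward (@gamma R) T A
                  = \int[@gamma R]_(x in A) (expR (- Vpot c0 x))%:E)%E])].
Proof.
move=> _; split.
- exact: Vpot_add_sqr_convex.
- by exists c0; exact: Vpot_le.
- exact: Vpot_no_lipschitz_transport.
Qed.
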